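(* Let $b_1<\dots<b_n$ be the black and $w_1<\dots<w_n$ the white nodes of $\mathbf N=\{1,\dots,2n\}$, and for black $i$, white $j$ let $\epsilon_{i,j}=(-1)^{[i>j]}\,\mathrm{sign}(i,j)\in\{\pm1\}$, where $(-1)^{[i>j]}$ is $-1$ if $i>j$ and $1$ otherwise (these are the signs of the entries of $M=[(-1)^{[i>j]}\mathrm{sign}(i,j)Y_{i,j}]^{i=b_1..b_n}_{j=w_1..w_n}$). Then: (a) if there is no couple of consecutive white nodes $(m,m+1)$ with $b_a<m<m+1<b_{a+1}$, then $\epsilon_{b_{a+1},w}=-\epsilon_{b_a,w}$ for every white $w$; symmetrically, if there is no couple of consecutive black nodes strictly between $w_c$ and $w_{c+1}$, then $\epsilon_{b,w_{c+1}}=-\epsilon_{b,w_c}$ for every black $b$ (so $M$ is a block matrix whose blocks have checkerboard sign pattern). (b) There exist $r_1,\dots,r_n,c_1,\dots,c_n\in\{\pm1\}$ with $r_a c_d\,\epsilon_{b_a,w_d}=(-1)^{a+d}$ for all $a,d$; if $t$ denotes the number of $-1$'s among the $r_a$ and $c_d$ (whose parity is independent of the choice), then $$(-1)^t=\mathrm{sign}_c(\mathbf N)\,(-1)^{\sum_{i=1}^{2k}\lfloor n_i/2\rfloor}\ \text{ if node 1 is black},\qquad (-1)^t=(-1)^n\,\mathrm{sign}_c(\mathbf N)\,(-1)^{\sum_{i=1}^{2k}\lfloor n_i/2\rfloor}\ \text{ if node 1 is white}.$$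
   Context: Nodes $1,\dots,2n$ arranged counterclockwise, each colored black or white, $n$ of each. A couple of consecutive nodes of the same color is $(m,m+1)$, $m\in\{1,\dots,2n\}$, indices mod $2n$ (so $(2n,1)$ allowed), with $m,m+1$ same color; list all couples as $(n_1,n_1+1),\dots,(n_{2k},n_{2k}+1)$ with $n_1<\dots<n_{2k}$; the black couples have first elements $s_1<\dots<s_k$ and the white couples $u_1<\dots<u_k$. For black $i$, white $j$: $a_{i,j}$ = number of $m$ with $\min(i,j)\le m<m+1\le\max(i,j)$, $m,m+1$ same color; $\mathrm{sign}(i,j)=(-1)^{(|i-j|+a_{i,j}-1)/2}$. If node 1 is black let $\varphi(u_i)=2i-1,\varphi(s_i)=2i$; if white let $\varphi(s_i)=2i-1,\varphi(u_i)=2i$; $\mathrm{sign}_c(\mathbf N)$ = sign of the permutation $(\varphi(n_1),\dots,\varphi(n_{2k}))$, and $1$ if $k=0$. *)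

(* Nodes are the naturals 1..2n; a coloring is col : nat -> bool,
   true = black, false = white (only values on 1..2n matter). *)
From mathcomp Require Import all_boot all_order all_algebra.
Set Implicit Arguments. Unset Strict Implicit. Unset Printing Implicit Defensive.
Import GRing.Theory Num.Theory.

Definition nodes (n : nat) : seq nat := iota 1 (2 * n).

Definition blacks (n : nat) (col : nat -> bool) : seq nat := [seq m <- nodes n | col m].
Definition whites (n : nat) (col : nat -> bool) : seq nat := [seq m <- nodes n | ~~ col m].

(* 0-based indexing: bnode n col a = b_(a+1), wnode n col d = w_(d+1) *)
Definition bnode (n : nat) (col : nat -> bool) (a : nat) : nat := nth 0 (blacks n col) a.
Definition wnode (n : nat) (col : nat -> bool) (d : nat) : nat := nth 0 (whites n col) d.

Definition acount (col : nat -> bool) (i j : nat) : nat :=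
  count (fun m => col m == col m.+1) (iota (minn i j) (maxn i j - minn i j)).

Definition sgn (col : nat -> bool) (i j : nat) : int :=
  (-1) ^+ (((maxn i j - minn i j) + acount col i j - 1) %/ 2).

Definition eps (col : nat -> bool) (i j : nat) : int :=
  (-1) ^+ (j < i) * sgn col i j.

Definition nxt (n m : nat) : nat := if m == 2 * n then 1 else m.+1.

(* first elements n_1 < ... < n_{2k} of couples of consecutive same-colored nodes *)
Definition couples (n : nat) (col : nat -> bool) : seq nat :=
  [seq m <- nodes n | col m == col (nxt n m)].
Definition bcouples (n : nat) (col : nat -> bool) : seq nat := [seq m <- couples n col | col m].
Definition wcouples (n : nat) (col : nat -> bool) : seq nat := [seq m <- couples n col | ~~ col m].

Definition phi (n : nat) (col : nat -> bool) (m : nat) : nat :=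
  if col m then
    (if col 1 then 2 * (index m (bcouples n col)).+1 else (2 * (index m (bcouples n col)).+1).-1)
  else
    (if col 1 then (2 * (index m (wcouples n col)).+1).-1 else 2 * (index m (wcouples n col)).+1).

Definition inversions (s : seq nat) : nat :=
  \sum_(i < size s) \sum_(j < size s) ((i < j) && (nth 0 s j < nth 0 s i)).

Definition seqsign (s : seq nat) : int := (-1) ^+ inversions s.

Definition signc (n : nat) (col : nat -> bool) : int := seqsign (map (phi n col) (couples n col)).

Definition floorsum (n : nat) (col : nat -> bool) : nat := \sum_(m <- couples n col) m./2.

(* Let level m = m + #{k < m : (k, k+1) is a couple}, not counting the cyclic couple (2n, 1).
   Then |i - j| + a_{i,j} = |level i - level j|, and level m is odd exactly when m has the colour
   of node 1, so for i black and j white the sign factorises: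
     eps_{i,j} = (-1)^(floor((level i + 1)/2)) * (-1)^(floor(level j / 2)).
   (a): between b_a and b_{a+1} with no white couple in between, the level rises by exactly 2
   (symmetrically for whites).  (b): normalising signs are unique up to a global sign, so
   (-1)^t is the product of all the factors above, i.e. (-1)^E with
   E = sum_m floor((level m + [m black]) / 2).
   To compute E mod 2, close the cycle by a node 2n+1 coloured like node 1.  The levels of the
   2n nodes together with the numbers level c + 1, c running over the 2k couples, are exactly
   1, ..., 2(n+k); so E is an explicit sum over 1..2(n+k) minus a sum over the couples, and the
   latter is sum floor(n_i/2) plus a term of known parity plus the sum of the positions of the
   couples not coloured like node 1, which is also the parity of the permutation phi. *)

From mathcomp Require Import all_boot all_order all_algebra.
From mathcomp Require Import zify ring.
Import GRing.Theory Num.Theory.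

Set Implicit Arguments.
Unset Strict Implicit.
Unset Printing Implicit Defensive.

Lemma signr_eq_mod2 (a b : nat) : a = b %[mod 2] -> ((-1) ^+ a = (-1) ^+ b :> int)%R.
Proof. by rewrite !modn2 => h; rewrite -signr_odd -[in RHS]signr_odd; case: (odd a) h; case: (odd b). Qed.

Lemma signr_eq_mod2S (a b : nat) : a = b.+1 %[mod 2] -> ((-1) ^+ a = - (-1) ^+ b :> int)%R.
Proof. by move/signr_eq_mod2 ->; rewrite exprS mulN1r. Qed.

Lemma signr_sum (I : Type) (r : seq I) (P : pred I) (f : I -> nat) :
  ((-1) ^+ (\sum_(i <- r | P i) f i) = \prod_(i <- r | P i) (-1) ^+ f i :> int)%R.
Proof. by apply: (big_ind2 (fun k (x : int) => (-1) ^+ k = x)%R) => // x1 x2 y1 y2 <- <-; rewrite exprD. Qed.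

Lemma iota1S L : iota 1 L.+1 = rcons (iota 1 L) L.+1.
Proof. by rewrite -cats1 -(addn1 L) iotaD addnC. Qed.

Lemma sorted_nth_succ_gap (s : seq nat) a m : sorted ltn s -> a.+1 < size s ->
  nth 0 s a < m -> m < nth 0 s a.+1 -> m \notin s.
Proof.
move=> s_sorted sa am ma; apply/negP => ms.
have i_lt := index_mem m s; rewrite ms in i_lt.
have s_leq : sorted leq s by have := ltn_sorted_uniq_leq s; rewrite s_sorted => /esym/andP[].
have mono := sorted_leq_nth leq_trans leqnn 0 s_leq.
rewrite -(nth_index 0 ms) in am ma.
case: (leqP (index m s) a) => [ia | ai].
- by have := mono _ _ i_lt (ltnW sa) ia; rewrite leqNgt am.
- by have := mono _ _ sa i_lt ai; rewrite leqNgt ma.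
Qed.

Definition index_sum (P : pred nat) (s : seq nat) : nat := \sum_(m <- s | P m) index m s.

Lemma index_sum_rcons P s x : x \notin s ->
  index_sum P (rcons s x) = index_sum P s + P x * size s.
Proof.
move=> xs; rewrite /index_sum -cats1 big_cat big_cons big_nil index_cat (negbTE xs) /= eqxx.
congr (_ + _); last by case: (P x); rewrite /= ?addn0 ?mul1n.
rewrite big_seq_cond [RHS]big_seq_cond.
by apply: eq_bigr => m /andP[ms _]; rewrite index_cat ms.
Qed.

Lemma inversions_rcons s v :
  inversions (rcons s v) = inversions s + count (fun y => v < y) s.
Proof.
have count_nth : count (fun y => v < y) s = \sum_(i < size s) (v < nth 0 s i).
  by rewrite -sum1_count (big_nth 0) big_mkord big_mkcond; apply: eq_bigr => i _; case: (_ < _).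
rewrite /inversions size_rcons big_ord_recr /= [X in _ + X]big1 ?addn0; last first.
  by move=> j _; have := ltn_ord j; case: ltnP.
rewrite count_nth -big_split /=; apply: eq_bigr => i _.
rewrite big_ord_recr /= ltn_ord !nth_rcons ltn_ord eqxx ltnn.
by congr (_ + _); apply: eq_bigr => j _; rewrite nth_rcons ltn_ord.
Qed.

Lemma count_index_uniq (P : pred nat) (s : seq nat) : uniq s ->
  count (fun m => P (index m s)) s = count P (iota 0 (size s)).
Proof.
elim: s P => //= x s IH P /andP[xs us]; rewrite eqxx; congr (_ + _).
rewrite -(addn0 1) iotaDl count_map -(IH (fun k => P k.+1)) //.
by apply: eq_in_count => y ys /=; rewrite ifN //; apply: contraNneq xs => ->.
Qed.

Lemma count_leq_iota p j : count (leq p) (iota 0 j) = j - p.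
Proof. by elim: j => // j IH; rewrite -addn1 iotaD count_cat IH /=; case: leqP; lia. Qed.

(* The labelling phi of the paper, with q the couples coloured like node 1. *)
Definition shuffle_label (q : pred nat) (s : seq nat) (m : nat) : nat :=
  if q m then 2 * (index m [seq x <- s | q x]).+1
  else (2 * (index m [seq x <- s | ~~ q x]).+1).-1.

Lemma count_gt_shuffle_label q s v : uniq s ->
  count (fun y => v < y) [seq shuffle_label q s m | m <- s] =
  count (fun k => v < 2 * k.+1) (iota 0 (count q s)) +
  count (fun k => v < (2 * k.+1).-1) (iota 0 (count (predC q) s)).
Proof.
move=> us; rewrite count_map -(permP (permEl (perm_filterC q s))) count_cat.
rewrite -[count q s]size_filter -[count (predC q) s]size_filter.
rewrite -!count_index_uniq ?filter_uniq //; congr (_ + _).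
  by apply: eq_in_count => m; rewrite mem_filter /shuffle_label /= => /andP[-> _].
by apply: eq_in_count => m; rewrite mem_filter /shuffle_label /= => /andP[/negbTE -> _].
Qed.

Lemma shuffle_label_rcons q s x m : m \in s -> shuffle_label q (rcons s x) m = shuffle_label q s m.
Proof.
move=> ms; rewrite /shuffle_label -cats1 !filter_cat !index_cat.
by case qm: (q m); rewrite mem_filter ?qm ms.
Qed.

Lemma shuffle_label_rcons_last q s x : x \notin s ->
  shuffle_label q (rcons s x) x = if q x then 2 * (count q s).+1 else (2 * (count (predC q) s).+1).-1.
Proof.
move=> xs; have ix : index x [:: x] = 0 by rewrite /= eqxx.
rewrite /shuffle_label !filter_rcons.
by case qx: (q x); rewrite ?qx -cats1 index_cat mem_filter (negbTE xs) andbF ix addn0 size_filter.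
Qed.

Lemma inversions_shuffle_label_rcons q s x : uniq s -> x \notin s ->
  inversions [seq shuffle_label q (rcons s x) m | m <- rcons s x] =
  inversions [seq shuffle_label q s m | m <- s] +
  (if q x then count (predC q) s - (count q s).+1 else count q s - count (predC q) s).
Proof.
move=> us xs; rewrite map_rcons inversions_rcons shuffle_label_rcons_last //.
have -> : [seq shuffle_label q (rcons s x) m | m <- s] = [seq shuffle_label q s m | m <- s].
  by apply/eq_in_map => m ms; rewrite shuffle_label_rcons.
rewrite count_gt_shuffle_label // -!count_leq_iota.
case: (q x); congr addn.
- rewrite [X in X + _](@eq_in_count _ _ pred0) ?count_pred0; last by move=> k; rewrite mem_iota /=; lia.
  by apply: eq_count => k /=; lia.
- rewrite [X in _ + X](@eq_in_count _ _ pred0) ?count_pred0 ?addn0; last by move=> k; rewrite mem_iota /=; lia.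
  by apply: eq_count => k /=; lia.
Qed.

Lemma inversions_shuffle_label q s : uniq s ->
  inversions [seq shuffle_label q s m | m <- s] =
  index_sum (predC q) s + (count (predC q) s - count q s) %/ 2 %[mod 2].
Proof.
elim/last_ind: s => [|s x IH]; first by rewrite /inversions /index_sum /= big_ord0 big_nil.
rewrite rcons_uniq => /andP[xs us].
rewrite inversions_shuffle_label_rcons // index_sum_rcons // -!cats1 !count_cat /=.
move: (IH us); rewrite -(count_predC q s).
move: (inversions _) (index_sum _ _) (count q s) (count (predC q) s) => I S i j.
by case: (q x) => /=; lia.
Qed.

Section Level.
Variable col : nat -> bool.

Definition same_color (m : nat) : bool := col m == col m.+1.
Definition first_color (m : nat) : bool := col m == col 1.

Definition level (m : nat) : nat := m + count same_color (iota 1 m.-1).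

Definition couples_upto (L : nat) : seq nat := [seq m <- iota 1 L | same_color m].

Lemma level_couples_upto L : level L.+1 = L.+1 + size (couples_upto L).
Proof. by rewrite /level size_filter. Qed.

Lemma couples_uptoS L :
  couples_upto L.+1 = if same_color L.+1 then rcons (couples_upto L) L.+1 else couples_upto L.
Proof. by rewrite /couples_upto iota1S filter_rcons. Qed.

Lemma levelS m : 0 < m -> level m.+1 = level m + 1 + same_color m.
Proof.
case: m => // m _; rewrite !level_couples_upto couples_uptoS.
by case: ifP; rewrite ?size_rcons /=; lia.
Qed.

Lemma odd_level m : 0 < m -> odd (level m) = first_color m.
Proof.
rewrite /first_color.
elim: m => // -[_ _ | m IH _]; first by rewrite /level /= eqxx.
rewrite levelS // oddD oddD IH // /same_color.
by case: (col m.+1); case: (col m.+2); case: (col 1).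
Qed.

Lemma level_acount i j : 0 < i -> i <= j -> level j = level i + (j - i) + acount col i j.
Proof.
move=> i0 ij; rewrite /level /acount (minn_idPl ij) (maxn_idPr ij).
have -> : j.-1 = i.-1 + (j - i) by lia.
rewrite iotaD count_cat; have -> : (1 + i.-1) = i by lia.
rewrite /same_color; lia.
Qed.

Lemma level_half_color m : 0 < m -> (level m + col m) %/ 2 = (level m + col 1) %/ 2.
Proof.
move/odd_level/(congr1 nat_of_bool); rewrite -modn2 /first_color.
by case: (col m); case: (col 1) => /=; lia.
Qed.

Lemma acountC i j : acount col i j = acount col j i.
Proof. by rewrite /acount minnC maxnC. Qed.

Lemma eps_level i j : 0 < i -> 0 < j -> col i -> ~~ col j ->
  eps col i j = ((-1) ^+ ((level i).+1 %/ 2 + level j %/ 2))%R.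
Proof.
move=> i0 j0 ci cj.
have odd_sum : (level i + level j) %% 2 = 1.
  by rewrite modn2 oddD !odd_level // /first_color; move: ci cj; case: (col i); case: (col j); case: (col 1).
move: odd_sum; rewrite /eps /sgn.
case: (ltngtP i j) => [ij | ji | eij]; last by move: cj; rewrite -eij ci.
- rewrite mul1r => odd_sum; apply: signr_eq_mod2.
  have := level_acount i0 (ltnW ij); lia.
- rewrite expr1 -exprS acountC => odd_sum.
  apply: signr_eq_mod2; have := level_acount j0 (ltnW ji); lia.
Qed.

Lemma level_nth_filter_succ (P : pred nat) n a :
    (forall x y, (P x == P y) = (col x == col y)) ->
    let s := [seq m <- nodes n | P m] in a.+1 < size s ->
    (forall m, nth 0 s a < m -> m.+1 < nth 0 s a.+1 -> ~~ (~~ P m && ~~ P m.+1)) ->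
  level (nth 0 s a.+1) = level (nth 0 s a) + 2.
Proof.
move=> P_col s sa no_gap; set u := nth 0 s a; set v := nth 0 s a.+1.
have s_sorted : sorted ltn s by apply: sorted_filter; [exact: ltn_trans | exact: iota_ltn_sorted].
have [Pu u0] : P u /\ 0 < u.
  by have := mem_nth 0 (ltnW sa); rewrite -/u mem_filter mem_iota => /andP[-> /andP[-> _]].
have [Pv v_le] : P v /\ v <= 2 * n.
  by have := mem_nth 0 sa; rewrite -/v mem_filter mem_iota => /andP[-> /andP[_]]; split; [|lia].
have uv : u < v by apply: (sorted_ltn_nth ltn_trans 0 s_sorted); rewrite ?inE // ltnW.
have notP m : u < m < v -> ~~ P m.
  move=> /andP[um mv]; apply: contraNN (sorted_nth_succ_gap s_sorted sa um mv) => Pm.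
  by rewrite mem_filter Pm mem_iota; lia.
have v_le_u2 : v <= u.+2.
  rewrite leqNgt; apply/negP => h; have := no_gap u.+1 (ltnSn u) h.
  by rewrite !notP //; apply/andP; lia.
have same_colorP x : same_color x = (P x == P x.+1) by rewrite P_col.
have [ev | ev] : v = u.+1 \/ v = u.+2 by lia.
- by rewrite -/v ev levelS // same_colorP Pu -ev Pv; lia.
- have Pu1 : ~~ P u.+1 by apply: notP; lia.
  rewrite -/v ev !levelS // !same_colorP Pu (negbTE Pu1) -ev Pv; lia.
Qed.

Lemma level_ge m : m <= level m.
Proof. exact: leq_addr. Qed.

(* The level grows by 2 exactly after a couple c, so the gaps between levels are the values level c + 1. *)
Lemma sum_level_couples (f : nat -> nat) L :
  \sum_(m <- iota 1 L) f (level m) + \sum_(c <- couples_upto L) f (level c).+1 =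
  \sum_(v <- iota 1 (level L.+1).-1) f v.
Proof.
elim: L => [|L IH]; first by rewrite /level !big_nil.
have -> : (level L.+2).-1 = (level L.+1).-1 + (1 + same_color L.+1).
  by rewrite levelS //; have := level_ge L.+1; lia.
rewrite iota1S -cats1 big_cat big_seq1 couples_uptoS iotaD big_cat -IH.
have -> : 1 + (level L.+1).-1 = level L.+1 by have := level_ge L.+1; lia.
case: (same_color L.+1); rewrite ?addn0 /=.
- by rewrite -cats1 big_cat /= !big_cons !big_nil; lia.
- by rewrite !big_cons !big_nil; lia.
Qed.

Lemma couples_upto_notin L : L.+1 \notin couples_upto L.
Proof. by rewrite mem_filter mem_iota; apply/negP => /andP[_]; lia. Qed.

Lemma sum_level_couples_mod2 (e : bool) L :
  \sum_(c <- couples_upto L) ((level c).+1 + e) %/ 2 =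
  \sum_(c <- couples_upto L) c %/ 2 + \sum_(t < size (couples_upto L)) t %/ 2
    + count first_color (couples_upto L) + e * count (predC first_color) (couples_upto L)
    + index_sum (predC first_color) (couples_upto L) %[mod 2].
Proof.
elim: L => [|L IH]; first by rewrite /couples_upto /index_sum /= !big_nil big_ord0 muln0.
rewrite couples_uptoS; case: ifP => // same.
rewrite index_sum_rcons ?couples_upto_notin // -!cats1 !big_cat !big_seq1 size_cat addn1.
rewrite big_ord_recr !count_cat /= addn0; move: IH.
have := odd_level (ltn0Sn L); rewrite level_couples_upto.
move/(congr1 nat_of_bool); rewrite -modn2.
by case: (first_color L.+1); case: e => /=; lia.
Qed.

Lemma count_couples_upto_balance L :
  count first_color (couples_upto L) + count (predC first_color) (iota 1 L.+1) + first_color L.+1 =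
  count (predC first_color) (couples_upto L) + count first_color (iota 1 L.+1).
Proof.
elim: L => [|L IH]; first by rewrite /first_color /= eqxx.
rewrite couples_uptoS (iota1S L.+1); move: IH.
rewrite /same_color /first_color -!cats1 !count_cat /= !addn0.
by case e1: (col L.+1); case: (col L.+2); rewrite /= -?cats1 ?count_cat /= ?e1;
  case: (col 1) => /=; lia.
Qed.
End Level.

Section Nodes.
Variables (n : nat) (col : nat -> bool).
Hypothesis hcount : count col (nodes n) = n.

Lemma size_blacks : size (blacks n col) = n.
Proof. by rewrite size_filter. Qed.

Lemma size_whites : size (whites n col) = n.
Proof.
rewrite size_filter (@eq_count _ (fun m => ~~ col m) (predC col)) //.
by have := count_predC col (nodes n); rewrite hcount size_iota; lia.
Qed.

Lemma bnodeP a : a < n -> 0 < bnode n col a /\ col (bnode n col a).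
Proof.
move=> an; have : bnode n col a \in blacks n col by apply: mem_nth; rewrite size_blacks.
by rewrite mem_filter mem_iota => /andP[-> /andP[-> _]].
Qed.

Lemma wnodeP d : d < n -> 0 < wnode n col d /\ ~~ col (wnode n col d).
Proof.
move=> dn; have : wnode n col d \in whites n col by apply: mem_nth; rewrite size_whites.
by rewrite mem_filter mem_iota => /andP[-> /andP[-> _]].
Qed.

Lemma eps_bnode_succ a : a.+1 < n ->
    (forall m, bnode n col a < m -> m.+1 < bnode n col a.+1 -> ~ (col m = false /\ col m.+1 = false)) ->
  forall w, w \in whites n col -> eps col (bnode n col a.+1) w = (- eps col (bnode n col a) w)%R.
Proof.
move=> an no_gap w; rewrite mem_filter mem_iota => /andP[cw /andP[w0 _]].
have [b0 cb0] := bnodeP (ltnW an); have [b1 cb1] := bnodeP an.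
have step : level col (bnode n col a.+1) = level col (bnode n col a) + 2.
  apply: (@level_nth_filter_succ col col) => //; first by rewrite size_blacks.
  by move=> m h1 h2; apply/negP => /andP[/negbTE e1 /negbTE e2]; exact: no_gap h1 h2 _.
by rewrite !eps_level // step; apply: signr_eq_mod2S; lia.
Qed.

Lemma eps_wnode_succ d : d.+1 < n ->
    (forall m, wnode n col d < m -> m.+1 < wnode n col d.+1 -> ~ (col m = true /\ col m.+1 = true)) ->
  forall b, b \in blacks n col -> eps col b (wnode n col d.+1) = (- eps col b (wnode n col d))%R.
Proof.
move=> dn no_gap b; rewrite mem_filter mem_iota => /andP[cb /andP[b0 _]].
have [w0 cw0] := wnodeP (ltnW dn); have [w1 cw1] := wnodeP dn.
have step : level col (wnode n col d.+1) = level col (wnode n col d) + 2.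
  apply: (@level_nth_filter_succ col (predC col)); last first.
  - by move=> m h1 h2; apply/negP => /andP[/negPn e1 /negPn e2]; exact: no_gap h1 h2 _.
  - by rewrite size_whites.
  - by move=> x y /=; case: (col x); case: (col y).
by rewrite !eps_level // step; apply: signr_eq_mod2S; lia.
Qed.

Definition row_sign (a : nat) : int := ((-1) ^+ ((level col (bnode n col a)).+1 %/ 2))%R.
Definition col_sign (d : nat) : int := ((-1) ^+ (level col (wnode n col d) %/ 2))%R.

Lemma eps_row_col_sign a d : a < n -> d < n ->
  eps col (bnode n col a) (wnode n col d) = (row_sign a * col_sign d)%R.
Proof.
move=> an dn; have [b0 cb] := bnodeP an; have [w0 cw] := wnodeP dn.
by rewrite eps_level // exprD.
Qed.

Lemma prod_row_col_sign :
  (\prod_(a < n) row_sign a * \prod_(d < n) col_sign d =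
   (-1) ^+ (\sum_(m <- nodes n) (level col m + col m) %/ 2))%R.
Proof.
rewrite [in RHS](bigID col) /= exprD.
rewrite -[\sum_(i <- nodes n | col i) _](big_filter _ col) -/(blacks n col).
rewrite -[\sum_(i <- nodes n | ~~ col i) _](big_filter _ (predC col)) -/(whites n col).
rewrite !signr_sum; congr (_ * _)%R.
- rewrite [RHS](big_nth 0) size_blacks big_mkord; apply: eq_bigr => a _.
  by rewrite /row_sign (bnodeP (ltn_ord a)).2 addn1.
- rewrite [RHS](big_nth 0) size_whites big_mkord; apply: eq_bigr => d _.
  by rewrite /col_sign (negbTE (wnodeP (ltn_ord d)).2) addn0.
Qed.
End Nodes.

Lemma sum_iota_half (M : nat) (e : bool) : \sum_(v <- iota 1 M.*2) (v + e) %/ 2 = M * (M + e).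
Proof.
elim: M => [|M IH]; first by rewrite big_nil.
rewrite doubleS -addn2 iotaD big_cat IH /= !big_cons big_nil.
by clear IH; case: e; nia.
Qed.

Lemma sum_ord_half (k : nat) : \sum_(t < k.*2) t %/ 2 = (\sum_(u < k) u).*2.
Proof.
elim: k => [|k IH]; first by rewrite !big_ord0.
by rewrite doubleS !big_ord_recr /= IH doubleD -addnA; congr addn; lia.
Qed.

(* Node 2n+1 is a copy of node 1, turning the cyclic couple (2n, 1) into an ordinary one. *)
Definition cycle_closure (n : nat) (col : nat -> bool) (m : nat) : bool :=
  if m == (2 * n).+1 then col 1 else col m.

Section Closure.
Variables (n : nat) (col : nat -> bool).
Hypothesis hcount : count col (nodes n) = n.

Local Notation col' := (cycle_closure n col).

Lemma cycle_closureE m : m <= 2 * n -> col' m = col m.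
Proof. by move=> m_le; rewrite /cycle_closure ifN //; apply/eqP; lia. Qed.

Lemma cycle_closure1 : col' 1 = col 1.
Proof. by rewrite /cycle_closure; case: ifP. Qed.

Lemma couples_upto_closure : couples_upto col' (2 * n) = couples n col.
Proof.
apply: eq_in_filter => m; rewrite mem_iota => m_range.
rewrite /same_color /nxt cycle_closureE; last by lia.
have [-> | ne] := eqVneq m (2 * n); first by rewrite /cycle_closure !eqxx.
by rewrite /cycle_closure eqSS (negbTE ne).
Qed.

Lemma level_closure m : m <= 2 * n -> level col' m = level col m.
Proof.
move=> m_le; rewrite /level; congr addn; apply: eq_in_count => k; rewrite mem_iota => k_range.
by rewrite /same_color !cycle_closureE //; lia.
Qed.

Lemma first_color_closure m : m \in couples n col -> first_color col' m = (col m == col 1).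
Proof.
by rewrite mem_filter mem_iota => /andP[_ m_range]; rewrite /first_color cycle_closure1 cycle_closureE //; lia.
Qed.

Lemma count_first_color_closure : count (first_color col') (nodes n) = n.
Proof.
rewrite (@eq_in_count _ _ (fun m => col m == col 1)); last first.
  by move=> m; rewrite mem_iota => m_range; rewrite /first_color cycle_closure1 cycle_closureE //; lia.
case: (col 1); rewrite ?(eq_count (fun m => eqb_id (col m))) // -size_filter.
by rewrite (@eq_filter _ _ (predC col)) ?size_whites // => m /=; case: (col m).
Qed.

Lemma phi_shuffle_label :
  map (phi n col) (couples n col) =
  map (shuffle_label (first_color col') (couples n col)) (couples n col).
Proof.
set K := couples n col.
have filter_eqb b : [seq x <- K | col x == b] = if b then bcouples n col else wcouples n col.
  by case: b; apply: eq_filter => x; case: (col x).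
have fq : [seq x <- K | first_color col' x] = [seq x <- K | col x == col 1].
  by apply: eq_in_filter => x /first_color_closure.
have fnq : [seq x <- K | ~~ first_color col' x] = [seq x <- K | col x == ~~ col 1].
  by apply: eq_in_filter => x /first_color_closure ->; case: (col x); case: (col 1).
apply/eq_in_map => m mK; rewrite /phi /shuffle_label first_color_closure // fq fnq !filter_eqb.
by case: (col 1); case: (col m).
Qed.

Lemma sum_level_closure :
  \sum_(m <- nodes n) (level col m + col m) %/ 2 =
  \sum_(m <- iota 1 (2 * n)) (level col' m + col 1) %/ 2.
Proof.
rewrite big_seq [RHS]big_seq; apply: eq_bigr => m; rewrite mem_iota => m_range.
by rewrite level_half_color ?level_closure //; lia.
Qed.

Lemma count_couples_first_color :
  count (predC (first_color col')) (couples n col) = count (first_color col') (couples n col).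
Proof.
have := count_couples_upto_balance col' (2 * n).
rewrite couples_upto_closure iota1S -!cats1 !count_cat count_first_color_closure.
have := count_predC (first_color col') (nodes n); rewrite count_first_color_closure size_iota.
have q_end : first_color col' (2 * n).+1 by rewrite /first_color cycle_closure1 /cycle_closure eqxx.
by rewrite -/(nodes n) /= q_end; lia.
Qed.

Lemma sign_level_sum :
  ((-1) ^+ (\sum_(m <- nodes n) (level col m + col m) %/ 2) =
   (if col 1 then 1 else (-1) ^+ n) * signc n col * (-1) ^+ floorsum n col :> int)%R.
Proof.
set K := couples n col; set q := first_color col'; set k := count q K.
have sizeK : size K = k.*2 by rewrite -(count_predC q K) count_couples_first_color addnn.
have partition := sum_level_couples col' (fun v => (v + col 1) %/ 2) (2 * n).
rewrite level_couples_upto couples_upto_closure -/K -sum_level_closure sizeK in partition.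
rewrite (_ : ((2 * n).+1 + k.*2).-1 = (n + k).*2) ?sum_iota_half in partition; last by lia.
have total_mod2 : (n + k) * (n + k + col 1) = ~~ col 1 * (n + k) %[mod 2].
  by rewrite !modn2 oddM; case: (col 1); rewrite /= ?addn0 ?addn1 ?mul1n /= ?andbb ?andbN.
have gap := sum_level_couples_mod2 col' (col 1) (2 * n).
rewrite couples_upto_closure -/K -/q -/k sizeK sum_ord_half in gap.
rewrite (eq_bigr _ (fun c _ => divn2 c)) count_couples_first_color -/K -/q -/k in gap.
have inv := inversions_shuffle_label q (filter_uniq _ (iota_uniq 1 (2 * n)) : uniq K).
rewrite count_couples_first_color subnn in inv.
rewrite /signc /seqsign phi_shuffle_label -/K -/q /floorsum -/K.
have -> : (if col 1 then 1 else (-1) ^+ n : int)%R = ((-1) ^+ (~~ col 1 * n))%R.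
  by case: (col 1); rewrite /= ?mul0n ?mul1n.
rewrite -!exprD; apply: signr_eq_mod2; move: partition gap inv total_mod2.
move: (\sum_(m <- nodes n) _) (\sum_(c <- K) _) (\sum_(c <- K) c./2) (inversions _) => E G F I.
move: (index_sum _ _) (\sum_(u < k) u) ((n + k) * (n + k + col 1)) => S X T.
by case: (col 1) => /=; lia.
Qed.
End Closure.

Local Open Scope ring_scope.

Lemma prod_rank_one_signs (K : comRingType) n (r c rho gam : 'I_n -> K) :
    (forall a, rho a ^+ 2 = 1) -> (forall d, gam d ^+ 2 = 1) ->
    (forall a d, r a * c d * (rho a * gam d) = (-1) ^+ (a + d)) ->
  \prod_a r a * \prod_d c d = \prod_a rho a * \prod_d gam d.
Proof.
move=> rho_sq gam_sq r_c.
pose s a := r a * rho a * (-1) ^+ a; pose t d := c d * gam d * (-1) ^+ d.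
have s_t a d : s a * t d = 1.
  have -> : s a * t d = r a * c d * (rho a * gam d) * ((-1) ^+ a * (-1) ^+ d) by rewrite /s /t; ring.
  by rewrite r_c -exprD -expr2 sqrr_sign.
have r_eq a : r a = s a * rho a * (-1) ^+ a.
  transitivity (r a * (rho a ^+ 2 * ((-1) ^+ a) ^+ 2)); last by rewrite /s; ring.
  by rewrite rho_sq sqrr_sign !mulr1.
have c_eq d : c d = t d * gam d * (-1) ^+ d.
  transitivity (c d * (gam d ^+ 2 * ((-1) ^+ d) ^+ 2)); last by rewrite /t; ring.
  by rewrite gam_sq sqrr_sign !mulr1.
clearbody s t; rewrite (eq_bigr _ (fun a _ => r_eq a)) (eq_bigr _ (fun d _ => c_eq d)) !big_split /=.
set P := \prod_(i < n) (-1) ^+ i.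
have -> : \prod_i s i * \prod_i rho i * P * (\prod_i t i * \prod_i gam i * P) =
  (\prod_i s i * \prod_i t i) * (\prod_i rho i * \prod_i gam i) * (P * P) by ring.
have -> : \prod_i s i * \prod_i t i = 1 by rewrite -big_split big1 // => a _; exact: s_t.
have -> : P * P = 1 by rewrite /P -big_split big1 // => a _; exact: sqrr_sign.
by rewrite mul1r mulr1.
Qed.

Lemma sign_pm (k : nat) : (-1) ^+ k = 1 :> int \/ (-1) ^+ k = -1 :> int.
Proof. by rewrite -signr_odd; case: (odd k); [right | left]. Qed.

Lemma signr_eqN1 (x : int) : x = 1 \/ x = -1 -> (-1) ^+ (x == -1) = x.
Proof. by case=> ->. Qed.

Theorem mainTheorem15 (n : nat) (col : nat -> bool)
  (hcount : count col (nodes n) = n) :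
  (* (a), rows *)
  (forall a : nat, (a.+1 < n)%N ->
     (forall m : nat, (bnode n col a < m)%N -> (m.+1 < bnode n col a.+1)%N ->
        ~ (col m = false /\ col m.+1 = false)) ->
     forall w : nat, w \in whites n col ->
       eps col (bnode n col a.+1) w = - eps col (bnode n col a) w) /\
  (* (a), columns *)
  (forall c : nat, (c.+1 < n)%N ->
     (forall m : nat, (wnode n col c < m)%N -> (m.+1 < wnode n col c.+1)%N ->
        ~ (col m = true /\ col m.+1 = true)) ->
     forall b : nat, b \in blacks n col ->
       eps col b (wnode n col c.+1) = - eps col b (wnode n col c)) /\
  (* (b) *)
  (exists (r c : 'I_n -> int),
     (forall a, r a = 1 \/ r a = -1) /\ (forall d, c d = 1 \/ c d = -1) /\
     (forall a d : 'I_n, r a * c d * eps col (bnode n col a) (wnode n col d) = (-1) ^+ (a + d)%N)) /\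
  (forall (r c : 'I_n -> int),
     (forall a, r a = 1 \/ r a = -1) -> (forall d, c d = 1 \/ c d = -1) ->
     (forall a d : 'I_n, r a * c d * eps col (bnode n col a) (wnode n col d) = (-1) ^+ (a + d)%N) ->
     let t := ((\sum_(a < n) (r a == -1)%R) + (\sum_(d < n) (c d == -1)%R))%N in
     (-1) ^+ t = (if col 1%N then 1 else (-1) ^+ n) * signc n col * (-1) ^+ floorsum n col).
Proof.
have eps_RC (a d : 'I_n) := eps_row_col_sign hcount (ltn_ord a) (ltn_ord d).
split; first exact: eps_bnode_succ.
split; first exact: eps_wnode_succ.
split.
  exists (fun a => (-1) ^+ a * row_sign n col a), (fun d => (-1) ^+ d * col_sign n col d).
  split; [|split].
  - by move=> a; rewrite /row_sign -exprD; exact: sign_pm.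
  - by move=> d; rewrite /col_sign -exprD; exact: sign_pm.
  move=> a d; rewrite eps_RC exprD.
  transitivity ((-1) ^+ a * (-1) ^+ d * row_sign n col a ^+ 2 * col_sign n col d ^+ 2); first by ring.
  by rewrite /row_sign /col_sign !sqrr_sign !mulr1.
move=> r c r_pm c_pm r_c t.
have -> : (-1) ^+ t = \prod_a r a * \prod_d c d.
  rewrite exprD !signr_sum; congr (_ * _); apply: eq_bigr => i _; exact: signr_eqN1.
rewrite (@prod_rank_one_signs _ _ r c (row_sign n col) (col_sign n col)).
- by rewrite prod_row_col_sign // sign_level_sum.
- by move=> a; exact: sqrr_sign.
- by move=> d; exact: sqrr_sign.
- by move=> a d; rewrite -eps_RC.
Qed.
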